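(* Consider the Markov process described in the context with $K=1$, satisfying Assumption (A) and the ergodicity condition (E). Then for every $x=(x_1,\dots,x_c)\in\{-1,1\}^c$ the equation $(\mathrm{E}_x)$ has at least one root $\beta_0\in(0,1)$.
   Context: Fix integers $c\ge 1$ and $K\ge1$ (in the claim $K=1$). Consider an irreducible continuous-time Markov process on $V\cup W$, where $V$ is finite and $W=\{\mathbf n=(n_0,\dots,n_c): n_0\in\{0,1,\dots\},\ n_i\in\{0,1\}\}$. For each $i\in\{1,\dots,c\}$ and integer $k\le K$ there are nonnegative rates $a_{k,i},b_{k,i},c_{k,i},d_{k,i}$. From $\mathbf n\in W$, for each $i$ and $k\in\{-n_0,\dots,K\}$, the process jumps (changing only coordinates $0$ and $i$) from $(n_0,n_i)=(n_0,0)$ to $(n_0+k,1)$ at rate $a_{k,i}$ and to $(n_0+k,0)$ at rate $b_{k,i}$, and from $(n_0,1)$ to $(n_0+k,1)$ at rate $c_{k,i}$ and to $(n_0+k,0)$ at rate $d_{k,i}$; from $\mathbf n$ it jumps into $V$ with total rate $\sum_i\sum_{k\le -n_0-1}((1-n_i)(a_{k,i}+b_{k,i})+n_i(c_{k,i}+d_{k,i}))$; no other transitions leave $W$, and from $V$ no transitions go to states with $n_0\ge K$. Let $A_i(z)=\sum_{k=-\infty}^K a_{k,i}z^{K-k}$ and similarly $B_i,C_i,D_i$ with $b,c,d$. Assumption (A): for each $i$: (i) $A_i(1),B_i(1),C_i(1),D_i(1)<\infty$; (ii) $A_i(1),D_i(1)>0$; (iii) $A_i'(1),B_i'(1),C_i'(1),D_i'(1)<\infty$;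 (iv) $a_{K,i}=0$ or $d_{K,i}=0$; (v) $b_{K,i}=c_{K,i}\ne0$. Ergodicity condition (E): $0<\sum_{i=1}^c\frac{1}{A_i(1)+D_i(1)}\bigl(D_i(1)(A_i'(1)-KA_i(1)+B_i'(1)-KB_i(1))+A_i(1)(C_i'(1)-KC_i(1)+D_i'(1)-KD_i(1))\bigr)$. Let $F_i(z)=z^K(A_i(1)+B_i(1)-C_i(1)-D_i(1))-B_i(z)+C_i(z)$. For real $\beta_0\in[0,1]$ let $R_i(\beta_0)=\sqrt{F_i(\beta_0)^2+4A_i(\beta_0)D_i(\beta_0)}$ (nonnegative square root). For $x\in\{-1,1\}^c$, equation $(\mathrm E_x)$ in the unknown $\beta_0$ is \[0=\sum_{i=1}^c\Bigl(x_iR_i(\beta_0)+B_i(\beta_0)+C_i(\beta_0)-\beta_0^K\bigl(A_i(1)+B_i(1)+C_i(1)+D_i(1)\bigr)\Bigr).\] *)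

From Stdlib Require Import Reals Lra Lia.
From Coquelicot Require Import Coquelicot.
Open Scope R_scope.

(* Indexing convention: a rate family r_{k,i} (k integer, k <= K) is stored as
   [r i j] with j = K - k : nat, i.e. r_{k,i} = r i (K - k).
   Classes i range over 1 <= i <= c. *)

(* Generating function  R_i(z) = sum_{k<=K} r_{k,i} z^{K-k} = sum_j r i j z^j. *)
Definition gf (r : nat -> R) (z : R) : R := Series (fun j => r j * z ^ j).

Definition gf'1 (r : nat -> R) : R := Series (fun j => INR j * r j).

Definition Fi (K : nat) (a b c d : nat -> R) (z : R) : R :=
  z ^ K * (gf a 1 + gf b 1 - gf c 1 - gf d 1) - gf b z + gf c z.

Definition Ri (K : nat) (a b c d : nat -> R) (beta : R) : R :=
  sqrt (Fi K a b c d beta ^ 2 + 4 * gf a beta * gf d beta).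

Definition Ex_rhs (K c : nat) (a b cr d : nat -> nat -> R) (x : nat -> R)
    (beta : R) : R :=
  sum_n_m (fun i =>
      x i * Ri K (a i) (b i) (cr i) (d i) beta + gf (b i) beta + gf (cr i) beta
      - beta ^ K * (gf (a i) 1 + gf (b i) 1 + gf (cr i) 1 + gf (d i) 1)) 1 c.

Definition assumptionA (K : nat) (a b c d : nat -> R) : Prop :=
  (forall j, 0 <= a j /\ 0 <= b j /\ 0 <= c j /\ 0 <= d j) /\
  (ex_series a /\ ex_series b /\ ex_series c /\ ex_series d) /\
  (0 < gf a 1 /\ 0 < gf d 1) /\
  (ex_series (fun j => INR j * a j) /\ ex_series (fun j => INR j * b j) /\
   ex_series (fun j => INR j * c j) /\ ex_series (fun j => INR j * d j)) /\
  (* (iv): a_{K,i} = 0 or d_{K,i} = 0  (k = K  <->  j = 0) *)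
  (a 0%nat = 0 \/ d 0%nat = 0) /\
  (b 0%nat = c 0%nat /\ b 0%nat <> 0).

Definition ergodic (K c : nat) (a b cr d : nat -> nat -> R) : Prop :=
  0 < sum_n_m (fun i =>
        / (gf (a i) 1 + gf (d i) 1) *
        (gf (d i) 1 * (gf'1 (a i) - INR K * gf (a i) 1 + gf'1 (b i) - INR K * gf (b i) 1)
         + gf (a i) 1 * (gf'1 (cr i) - INR K * gf (cr i) 1 + gf'1 (d i) - INR K * gf (d i) 1)))
      1 c.

From Stdlib Require Import Reals Lra Lia.
From Coquelicot Require Import Coquelicot.
Open Scope R_scope.

(* Write g for the right-hand side of (E_x).  At beta = 0, assumptions (iv) and (v) make every
   discriminant F_i^2 + 4 A_i D_i vanish, so each summand equals 2 b_{1,i} > 0.  Since R_i >= 0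
   and x_i <= 1, g is bounded above by its value at x = (1,...,1), whose summands vanish at
   beta = 1.  Writing each generating function as r(1) - (1 - beta) q_r(beta), where the slope
   q_r tends to r'(1) from the left, and rationalising sqrt(F^2 + 4AD) - L, each of those
   summands divided by 1 - beta tends to -2 e_i, with e_i the i-th term of (E).  So (E) makes
   g negative just below 1, and the intermediate value theorem on [0, eta], where the power
   series are continuous, gives the root. *)

Section FilterLimits.

Context {T : Type} {F : (T -> Prop) -> Prop} {FF : Filter F}.

Lemma lim_const (c : R) : filterlim (fun _ => c) F (locally c).
Proof. apply filterlim_const. Qed.

Lemma lim_plus (f g : T -> R) (l m : R) :
  filterlim f F (locally l) -> filterlim g F (locally m) ->
  filterlim (fun t => f t + g t) F (locally (l + m)).
Proof. intros Hf Hg. exact (filterlim_comp_2 f g Rplus Hf Hg (filterlim_plus l m)). Qed.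

Lemma lim_minus (f g : T -> R) (l m : R) :
  filterlim f F (locally l) -> filterlim g F (locally m) ->
  filterlim (fun t => f t - g t) F (locally (l - m)).
Proof.
  intros Hf Hg. apply lim_plus; [exact Hf|].
  exact (filterlim_comp _ _ _ _ _ _ _ _ Hg (filterlim_opp m)).
Qed.

Lemma lim_mult (f g : T -> R) (l m : R) :
  filterlim f F (locally l) -> filterlim g F (locally m) ->
  filterlim (fun t => f t * g t) F (locally (l * m)).
Proof. intros Hf Hg. exact (filterlim_comp_2 f g Rmult Hf Hg (filterlim_mult l m)). Qed.

Lemma lim_pow (f : T -> R) (l : R) (n : nat) :
  filterlim f F (locally l) -> filterlim (fun t => f t ^ n) F (locally (l ^ n)).
Proof.
  intros Hf. induction n as [|n IH]; [apply lim_const|].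
  exact (lim_mult _ _ _ _ Hf IH).
Qed.

Lemma lim_sqrt (f : T -> R) (l : R) :
  filterlim f F (locally l) -> filterlim (fun t => sqrt (f t)) F (locally (sqrt l)).
Proof. intros Hf. exact (filterlim_comp _ _ _ _ _ _ _ _ Hf (continuous_sqrt l)). Qed.

Lemma lim_inv (f : T -> R) (l : R) : l <> 0 ->
  filterlim f F (locally l) -> filterlim (fun t => / f t) F (locally (/ l)).
Proof. intros Hl Hf. exact (filterlim_comp _ _ _ _ _ _ _ _ Hf (continuous_Rinv l Hl)). Qed.

Lemma lim_sum_n_m (G : nat -> T -> R) (l : nat -> R) (n m : nat) :
  (forall i, (n <= i <= m)%nat -> filterlim (G i) F (locally (l i))) ->
  filterlim (fun t => sum_n_m (fun i => G i t) n m) F (locally (sum_n_m l n m)).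
Proof.
  induction m as [|m IH]; intros HG.
  - destruct n.
    + rewrite sum_n_n. apply (filterlim_ext (G 0%nat)); [intros; now rewrite sum_n_n|].
      apply HG; lia.
    + rewrite sum_n_m_zero by lia.
      apply (filterlim_ext (fun _ => 0)); [intros; now rewrite sum_n_m_zero by lia|].
      apply lim_const.
  - destruct (Nat.le_gt_cases n (S m)) as [Hn | Hn].
    + destruct (Nat.eq_dec n (S m)) as [-> | Hne].
      * rewrite sum_n_n. apply (filterlim_ext (G (S m))); [intros; now rewrite sum_n_n|].
        apply HG; lia.
      * rewrite sum_n_Sm by lia.
        apply (filterlim_ext (fun t => sum_n_m (fun i => G i t) n m + G (S m) t)).
        { intros t. now rewrite sum_n_Sm by lia. }
        apply lim_plus; [apply IH; intros; apply HG; lia | apply HG; lia].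
    + rewrite sum_n_m_zero by lia.
      apply (filterlim_ext (fun _ => 0)); [intros; now rewrite sum_n_m_zero by lia|].
      apply lim_const.
Qed.

Lemma lim_eventually_lt (f : T -> R) (l m : R) :
  filterlim f F (locally l) -> l < m -> F (fun t => f t < m).
Proof. intros Hf Hlm. apply (Hf (fun y => y < m)). now apply open_lt. Qed.

Lemma lim_eventually_gt (f : T -> R) (l m : R) :
  filterlim f F (locally l) -> m < l -> F (fun t => m < f t).
Proof. intros Hf Hlm. apply (Hf (fun y => m < y)). now apply open_gt. Qed.

Lemma lim_value_eq (f : T -> R) (l l' : R) :
  filterlim f F (locally l) -> l = l' -> filterlim f F (locally l').
Proof. now intros Hf <-. Qed.

End FilterLimits.

(* [eassumption] comes first: [apply] would otherwise unfold named functions such as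
   [gf_slope] before the hypothesis about their limit gets a chance to match. *)
Ltac lim_auto :=
  repeat first
    [ eassumption | apply lim_const | apply lim_minus | apply lim_plus
    | apply lim_mult | apply lim_pow | apply lim_sqrt ].

Lemma lim_at_left_id (x : R) : filterlim (fun b => b) (at_left x) (locally x).
Proof. intros P [eps HP]. exists eps. intros y Hy _. now apply HP. Qed.

Lemma at_left_1_in_unit : at_left 1 (fun b => 0 < b < 1).
Proof.
  exists (mkposreal 1 Rlt_0_1). intros b Hb Hlt.
  change (Rabs (b - 1) < 1) in Hb. apply Rabs_def2 in Hb. lra.
Qed.

Lemma pow_unit_interval (b : R) (n : nat) : 0 <= b <= 1 -> 0 <= b ^ n <= 1.
Proof.
  intros Hb. split; [now apply pow_le|].
  rewrite <- (pow1 n). now apply pow_incr.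
Qed.

Lemma one_sub_pow_le (b : R) (n : nat) : 0 <= b <= 1 -> 1 - b ^ n <= INR n * (1 - b).
Proof.
  intros Hb. induction n as [|n IH]; [simpl; lra|].
  pose proof (pow_unit_interval b n Hb). rewrite S_INR. simpl. nra.
Qed.

Lemma one_sub_pow_ge (b : R) (n : nat) : 0 <= b <= 1 -> INR n * b ^ n * (1 - b) <= 1 - b ^ n.
Proof.
  intros Hb. induction n as [|n IH]; [simpl; lra|].
  pose proof (pow_unit_interval b n Hb). pose proof (pos_INR n). rewrite S_INR. simpl.
  assert (0 <= (INR n + 1) * (1 - b) * (b ^ n * (1 - b))) by (apply Rmult_le_pos; nra).
  nra.
Qed.

Lemma sum_n_le_Series (u : nat -> R) (N : nat) :
  (forall n, 0 <= u n) -> ex_series u -> sum_n u N <= Series u.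
Proof.
  intros Hu Hex. apply (is_lim_seq_incr_compare (sum_n u)).
  - exact (Series_correct _ Hex).
  - intros n. rewrite sum_Sn. pose proof (Hu (S n)). change (plus ?x ?y) with (x + y). lra.
Qed.

Lemma sum_n_nonneg (u : nat -> R) (N : nat) : (forall n, 0 <= u n) -> 0 <= sum_n u N.
Proof.
  intros Hu. induction N as [|N IH]; [rewrite sum_O; apply Hu|].
  rewrite sum_Sn. pose proof (Hu (S N)). change (plus ?x ?y) with (x + y). lra.
Qed.

Lemma term_le_Series (u : nat -> R) (n : nat) :
  (forall k, 0 <= u k) -> ex_series u -> u n <= Series u.
Proof.
  intros Hu Hex. apply Rle_trans with (sum_n u n); [|now apply sum_n_le_Series].
  destruct n as [|n]; [rewrite sum_O; lra|].
  rewrite sum_Sn. pose proof (sum_n_nonneg u n Hu). change (plus ?x ?y) with (x + y). lra.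
Qed.

Lemma Series_nonneg (u : nat -> R) : (forall n, 0 <= u n) -> ex_series u -> 0 <= Series u.
Proof. intros Hu Hex. apply Rle_trans with (u 0%nat); [apply Hu | now apply term_le_Series]. Qed.

Lemma sum_n_m_le_loc (u v : nat -> R) (n m : nat) :
  (forall k, (n <= k <= m)%nat -> u k <= v k) -> sum_n_m u n m <= sum_n_m v n m.
Proof.
  intros H. rewrite (sum_n_m_ext_loc u (fun k => Rmin (u k) (v k))).
  - apply sum_n_m_le. intros k. apply Rmin_r.
  - intros k Hk. now rewrite Rmin_left by auto.
Qed.

Lemma sum_n_m_pos (u : nat -> R) (n m : nat) :
  (n <= m)%nat -> (forall k, (n <= k <= m)%nat -> 0 < u k) -> 0 < sum_n_m u n m.
Proof.
  intros Hnm Hu. induction m as [|m IH].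
  - replace n with 0%nat by lia. rewrite sum_n_n. apply Hu; lia.
  - destruct (Nat.eq_dec n (S m)) as [-> | Hne]; [rewrite sum_n_n; apply Hu; lia|].
    rewrite sum_n_Sm by lia. change (plus ?x ?y) with (x + y).
    assert (0 < sum_n_m u n m) by (apply IH; [lia | intros; apply Hu; lia]).
    assert (0 < u (S m)) by (apply Hu; lia). lra.
Qed.

Definition finite_first_moment (a : nat -> R) : Prop :=
  (forall j, 0 <= a j) /\ ex_series a /\ ex_series (fun j => INR j * a j).

Section GeneratingFunction.

Variable a : nat -> R.
Hypothesis Ha : finite_first_moment a.

Lemma ex_series_weighted (w : nat -> R) :
  (forall j, 0 <= w j <= 1) -> ex_series (fun j => a j * w j).
Proof.
  destruct Ha as (Hpos & Hsum & _). intros Hw.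
  apply (@ex_series_le R_AbsRing R_CompleteNormedModule _ a); [|exact Hsum].
  intros n. change norm with Rabs. pose proof (Hw n). pose proof (Hpos n).
  rewrite Rabs_pos_eq by nra. nra.
Qed.

Lemma ex_series_gf (b : R) : 0 <= b <= 1 -> ex_series (fun j => a j * b ^ j).
Proof. intros Hb. apply ex_series_weighted. intros j. now apply pow_unit_interval. Qed.

Lemma gf_nonneg (b : R) : 0 <= b <= 1 -> 0 <= gf a b.
Proof.
  intros Hb. apply Series_nonneg; [|now apply ex_series_gf].
  intros n. pose proof (pow_unit_interval b n Hb). pose proof (proj1 Ha n). nra.
Qed.

Lemma gf_at_0 : gf a 0 = a 0%nat.
Proof. exact (PSeries_0 a). Qed.

Lemma CV_radius_ge_1 : Rbar_le 1 (CV_radius a).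
Proof.
  destruct Ha as (Hpos & Hsum & _).
  apply (proj1 (CV_radius_bounded a)). exists (Series a). intros n.
  rewrite pow1, Rmult_1_r, Rabs_pos_eq by apply Hpos.
  now apply term_le_Series.
Qed.

Lemma gf_continuous (b : R) : Rabs b < 1 -> continuous (gf a) b.
Proof.
  intros Hb. apply continuity_pt_filterlim, PSeries_continuity.
  now apply (Rbar_lt_le_trans _ 1); [|apply CV_radius_ge_1].
Qed.

Lemma ex_series_gf_sub (b : R) : 0 <= b <= 1 -> ex_series (fun j => a j * (1 - b ^ j)).
Proof.
  intros Hb. apply ex_series_weighted. intros j. pose proof (pow_unit_interval b j Hb). lra.
Qed.

Lemma gf_sub_Series (b : R) : 0 <= b <= 1 ->
  gf a 1 - gf a b = Series (fun j => a j * (1 - b ^ j)).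
Proof.
  intros Hb. unfold gf. rewrite <- Series_minus by (apply ex_series_gf; lra).
  apply Series_ext. intros j. rewrite pow1. ring.
Qed.

Definition gf_slope (b : R) : R := (gf a 1 - gf a b) / (1 - b).

Lemma gf_slope_le (b : R) : 0 <= b < 1 -> gf_slope b <= gf'1 a.
Proof.
  intros Hb. assert (Hb' : 0 <= b <= 1) by lra. destruct Ha as (Hpos & _ & Hmom).
  unfold gf_slope. apply Rle_div_l; [lra|].
  rewrite gf_sub_Series by lra. unfold gf'1.
  rewrite Rmult_comm, <- Series_scal_l. apply Series_le.
  - intros n. pose proof (pow_unit_interval b n Hb').
    pose proof (one_sub_pow_le b n Hb'). pose proof (Hpos n). split; nra.
  - exact (ex_series_scal_l (1 - b) _ Hmom).
Qed.

Lemma gf_slope_ge_partial (b : R) (N : nat) : 0 <= b < 1 ->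
  sum_n (fun j => INR j * a j * b ^ j) N <= gf_slope b.
Proof.
  intros Hb. assert (Hb' : 0 <= b <= 1) by lra.
  unfold gf_slope. apply Rle_div_r; [lra|].
  rewrite gf_sub_Series by lra.
  replace (sum_n _ N * (1 - b)) with (sum_n (fun j => INR j * a j * b ^ j * (1 - b)) N)
    by exact (sum_n_mult_r (K := R_Ring) (1 - b) _ N).
  apply Rle_trans with (sum_n (fun j => a j * (1 - b ^ j)) N).
  - apply sum_n_m_le. intros j.
    pose proof (one_sub_pow_ge b j Hb'). pose proof (proj1 Ha j). nra.
  - apply sum_n_le_Series; [|now apply ex_series_gf_sub].
    intros j. pose proof (pow_unit_interval b j Hb'). pose proof (proj1 Ha j). nra.
Qed.

Lemma gf_slope_lim : filterlim gf_slope (at_left 1) (locally (gf'1 a)).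
Proof.
  destruct Ha as (_ & _ & Hmom). pose proof (lim_at_left_id 1) as Hid.
  apply filterlim_locally. intros [eps Heps]; simpl.
  assert (Hpartial : eventually (fun N => gf'1 a - eps < sum_n (fun j => INR j * a j) N)).
  { apply (lim_eventually_gt _ (gf'1 a)); [exact (Series_correct _ Hmom) | lra]. }
  destruct Hpartial as [N HN]. specialize (HN N (Nat.le_refl N)).
  assert (Hpoly : filterlim (fun b => sum_n (fun j => INR j * a j * b ^ j) N) (at_left 1)
                    (locally (sum_n (fun j => INR j * a j) N))).
  { eapply lim_value_eq.
    - apply (lim_sum_n_m (fun j b => INR j * a j * b ^ j)). intros j _. lim_auto.
    - apply sum_n_m_ext. intros j. now rewrite pow1, Rmult_1_r. }
  apply (filter_imp (fun b => (0 < b < 1) /\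
                             gf'1 a - eps < sum_n (fun j => INR j * a j * b ^ j) N)).
  - intros b [Hb Hlow]. pose proof (gf_slope_le b). pose proof (gf_slope_ge_partial b N).
    change (Rabs (gf_slope b - gf'1 a) < eps). apply Rabs_def1; lra.
  - apply filter_and; [apply at_left_1_in_unit | exact (lim_eventually_gt _ _ _ Hpoly HN)].
Qed.

Lemma gf_left_continuous : filterlim (gf a) (at_left 1) (locally (gf a 1)).
Proof.
  pose proof (lim_at_left_id 1) as Hid. pose proof gf_slope_lim as Hslope.
  apply (filterlim_ext_loc (fun b => gf a 1 - (1 - b) * gf_slope b)).
  - apply (filter_imp (fun b => 0 < b < 1)); [|apply at_left_1_in_unit].
    intros b Hb. unfold gf_slope. field. lra.
  - eapply lim_value_eq; [lim_auto | ring].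
Qed.

End GeneratingFunction.

Lemma sqrt_sub_div (X L h N : R) :
  0 <= X -> h <> 0 -> sqrt X + L <> 0 -> X - L ^ 2 = h * N ->
  (sqrt X - L) / h = N / (sqrt X + L).
Proof.
  intros HX Hh HL Hdef.
  apply (Rmult_eq_reg_r (h * (sqrt X + L))); [|now apply Rmult_integral_contrapositive_currified].
  field_simplify; [|assumption..].
  rewrite <- Hdef, pow2_sqrt by assumption. ring.
Qed.

Definition class_term (a b c d : nat -> R) (x beta : R) : R :=
  x * Ri 1 a b c d beta + gf b beta + gf c beta
  - beta ^ 1 * (gf a 1 + gf b 1 + gf c 1 + gf d 1).

Definition drift (a b c d : nat -> R) : R :=
  / (gf a 1 + gf d 1) *
  (gf d 1 * (gf'1 a - gf a 1 + gf'1 b - gf b 1) + gf a 1 * (gf'1 c - gf c 1 + gf'1 d - gf d 1)).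

(* With h = 1 - beta and each generating function written as r(1) - h q_r, the discriminant
   F^2 + 4 A D minus the square of beta T - B(beta) - C(beta) equals h * class_defect; at h = 0
   and q_r = r'(1) it equals -4 (A + D) times the drift. *)
Definition class_defect (A B C D h qa qb qc qd : R) : R :=
  2 * (A + D) * (A + B + C + D - qb - qc) - 2 * (A - D) * (A + B - C - D - qb + qc)
  - 4 * (A * qd + D * qa)
  + h * ((A + B - C - D - qb + qc) ^ 2 + 4 * qa * qd - (A + B + C + D - qb - qc) ^ 2).

Section ClassAnalysis.

Variables a b c d : nat -> R.
Hypotheses (Ha : finite_first_moment a) (Hb : finite_first_moment b)
  (Hc : finite_first_moment c) (Hd : finite_first_moment d).
Hypotheses (HA : 0 < gf a 1) (HD : 0 < gf d 1).

Definition class_disc (beta : R) : R := Fi 1 a b c d beta ^ 2 + 4 * gf a beta * gf d beta.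

Definition class_level (beta : R) : R :=
  beta ^ 1 * (gf a 1 + gf b 1 + gf c 1 + gf d 1) - gf b beta - gf c beta.

Definition class_slope_defect (beta : R) : R :=
  class_defect (gf a 1) (gf b 1) (gf c 1) (gf d 1) (1 - beta)
    (gf_slope a beta) (gf_slope b beta) (gf_slope c beta) (gf_slope d beta).

Lemma class_term_one (beta : R) :
  class_term a b c d 1 beta = sqrt (class_disc beta) - class_level beta.
Proof. unfold class_term, Ri, class_disc, class_level. ring. Qed.

Lemma class_disc_nonneg (beta : R) : 0 <= beta <= 1 -> 0 <= class_disc beta.
Proof.
  intros Hbeta. pose proof (gf_nonneg a Ha beta Hbeta). pose proof (gf_nonneg d Hd beta Hbeta).
  pose proof (pow2_ge_0 (Fi 1 a b c d beta)). unfold class_disc. nra.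
Qed.

Lemma class_disc_sub_level (beta : R) : beta <> 1 ->
  class_disc beta - class_level beta ^ 2 = (1 - beta) * class_slope_defect beta.
Proof.
  intros Hbeta.
  assert (Hsub : forall r, gf r beta = gf r 1 - (1 - beta) * gf_slope r beta)
    by (intros r; unfold gf_slope; field; lra).
  unfold class_disc, class_level, class_slope_defect, class_defect, Fi.
  rewrite !(Hsub a), !(Hsub b), !(Hsub c), !(Hsub d). ring.
Qed.

Lemma class_term_slope_lim :
  filterlim (fun beta => class_term a b c d 1 beta / (1 - beta)) (at_left 1)
    (locally (-2 * drift a b c d)).
Proof.
  pose proof (lim_at_left_id 1) as Hid.
  pose proof (gf_left_continuous a Ha). pose proof (gf_left_continuous b Hb).
  pose proof (gf_left_continuous c Hc). pose proof (gf_left_continuous d Hd).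
  pose proof (gf_slope_lim a Ha). pose proof (gf_slope_lim b Hb).
  pose proof (gf_slope_lim c Hc). pose proof (gf_slope_lim d Hd).
  assert (Hdisc : filterlim (fun beta => sqrt (class_disc beta)) (at_left 1)
                    (locally (gf a 1 + gf d 1))).
  { eapply lim_value_eq; [unfold class_disc, Fi; lim_auto|].
    rewrite <- (sqrt_pow2 (gf a 1 + gf d 1)) by lra. f_equal. ring. }
  assert (Hlevel : filterlim class_level (at_left 1) (locally (gf a 1 + gf d 1))).
  { eapply lim_value_eq; [unfold class_level; lim_auto | ring]. }
  assert (Hdefect : filterlim class_slope_defect (at_left 1)
                      (locally (-4 * (gf a 1 + gf d 1) * drift a b c d))).
  { eapply lim_value_eq; [unfold class_slope_defect, class_defect; lim_auto|].
    unfold drift. field. lra. }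
  assert (Hden : at_left 1 (fun beta => 0 < sqrt (class_disc beta) + class_level beta)).
  { apply (lim_eventually_gt _ (2 * (gf a 1 + gf d 1))); [|lra].
    eapply lim_value_eq; [apply lim_plus; eassumption | ring]. }
  apply (filterlim_ext_loc
           (fun beta => class_slope_defect beta * / (sqrt (class_disc beta) + class_level beta))).
  - apply (filter_imp (fun beta => (0 < beta < 1) /\
                                   0 < sqrt (class_disc beta) + class_level beta));
      [|exact (filter_and _ _ at_left_1_in_unit Hden)].
    intros beta [Hbeta Hpos]. rewrite class_term_one. symmetry.
    apply sqrt_sub_div; [apply class_disc_nonneg; lra | lra | lra |].
    apply class_disc_sub_level. lra.
  - eapply lim_value_eq.
    + apply lim_mult; [exact Hdefect|]. apply lim_inv; [|apply lim_plus; eassumption]. lra.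
    + field. lra.
Qed.

Lemma class_term_continuous (x beta : R) :
  Rabs beta < 1 -> continuous (class_term a b c d x) beta.
Proof.
  intros Hbeta. pose proof (continuous_id beta).
  pose proof (gf_continuous a Ha beta Hbeta). pose proof (gf_continuous b Hb beta Hbeta).
  pose proof (gf_continuous c Hc beta Hbeta). pose proof (gf_continuous d Hd beta Hbeta).
  unfold continuous in *. unfold class_term, Ri, Fi. lim_auto.
Qed.

End ClassAnalysis.

Lemma class_term_le_one (a b c d : nat -> R) (x beta : R) :
  x <= 1 -> class_term a b c d x beta <= class_term a b c d 1 beta.
Proof.
  intros Hx. unfold class_term.
  pose proof (sqrt_pos (Fi 1 a b c d beta ^ 2 + 4 * gf a beta * gf d beta)).
  unfold Ri. nra.
Qed.

Lemma class_term_at_0 (a b c d : nat -> R) (x : R) :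
  (a 0%nat = 0 \/ d 0%nat = 0) -> b 0%nat = c 0%nat -> class_term a b c d x 0 = 2 * b 0%nat.
Proof.
  intros Had Hbc. unfold class_term, Ri, Fi. rewrite !gf_at_0, Hbc.
  replace (_ ^ 2 + _) with 0 by (destruct Had as [-> | ->]; ring).
  rewrite sqrt_0. ring.
Qed.

Lemma assumptionA_moments (K : nat) (a b c d : nat -> R) :
  assumptionA K a b c d ->
  finite_first_moment a /\ finite_first_moment b /\ finite_first_moment c /\ finite_first_moment d.
Proof.
  intros (Hpos & (Ea & Eb & Ec & Ed) & _ & (Ma & Mb & Mc & Md) & _).
  repeat split; auto; intros j; apply Hpos.
Qed.

Section Queue.

Variables (c : nat) (a b cr d : nat -> nat -> R).
Hypothesis Hassum : forall i, (1 <= i <= c)%nat -> assumptionA 1 (a i) (b i) (cr i) (d i).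

Lemma Ex_rhs_continuous (x : nat -> R) (beta : R) :
  Rabs beta < 1 -> continuity_pt (Ex_rhs 1 c a b cr d x) beta.
Proof.
  intros Hbeta. apply continuity_pt_filterlim. unfold Ex_rhs.
  apply (lim_sum_n_m (fun i => class_term (a i) (b i) (cr i) (d i) (x i))).
  intros i Hi. destruct (assumptionA_moments _ _ _ _ _ (Hassum i Hi)) as (Ha & Hb & Hc & Hd).
  now apply class_term_continuous.
Qed.

Lemma Ex_rhs_at_0_pos (x : nat -> R) : (1 <= c)%nat -> 0 < Ex_rhs 1 c a b cr d x 0.
Proof.
  intros Hc. apply sum_n_m_pos; [exact Hc|]. intros i Hi.
  destruct (Hassum i Hi) as (Hpos & _ & _ & _ & Had & Hbc & Hb0).
  change (0 < class_term (a i) (b i) (cr i) (d i) (x i) 0).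
  rewrite class_term_at_0 by assumption. destruct (Hpos 0%nat) as (_ & ? & _). lra.
Qed.

Lemma Ex_rhs_le_ones (x : nat -> R) (beta : R) :
  (forall i, (1 <= i <= c)%nat -> x i <= 1) ->
  Ex_rhs 1 c a b cr d x beta <= Ex_rhs 1 c a b cr d (fun _ => 1) beta.
Proof.
  intros Hx. apply sum_n_m_le_loc. intros i Hi. now apply class_term_le_one, Hx.
Qed.

Lemma Ex_rhs_ones_eventually_neg :
  ergodic 1 c a b cr d -> at_left 1 (fun beta => Ex_rhs 1 c a b cr d (fun _ => 1) beta < 0).
Proof.
  intros Herg.
  set (g := fun i beta => class_term (a i) (b i) (cr i) (d i) 1 beta).
  set (e := fun i => drift (a i) (b i) (cr i) (d i)).
  assert (He : 0 < sum_n_m e 1 c).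
  { erewrite sum_n_m_ext; [exact Herg|]. intros i. unfold e, drift. simpl INR.
    now rewrite !Rmult_1_l. }
  assert (Hlim : filterlim (fun beta => sum_n_m (fun i => g i beta / (1 - beta)) 1 c)
                   (at_left 1) (locally (-2 * sum_n_m e 1 c))).
  { eapply lim_value_eq.
    - apply (lim_sum_n_m (fun i beta => g i beta / (1 - beta)) (fun i => -2 * e i)).
      intros i Hi. destruct (assumptionA_moments _ _ _ _ _ (Hassum i Hi)) as (Ha & Hb & Hc & Hd).
      destruct (Hassum i Hi) as (_ & _ & [HA HD] & _).
      now apply class_term_slope_lim.
    - exact (sum_n_m_mult_l (K := R_Ring) (-2) e 1 c). }
  apply (filter_imp (fun beta => (0 < beta < 1) /\
                                 sum_n_m (fun i => g i beta / (1 - beta)) 1 c < 0)).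
  - intros beta [Hbeta Hneg]. change (sum_n_m (fun i => g i beta) 1 c < 0).
    assert (Hfactor : sum_n_m (fun i => g i beta / (1 - beta)) 1 c
                      = sum_n_m (fun i => g i beta) 1 c * / (1 - beta))
      by exact (sum_n_m_mult_r (K := R_Ring) _ _ 1 c).
    assert (0 < / (1 - beta)) by (apply Rinv_0_lt_compat; lra). nra.
  - apply filter_and; [apply at_left_1_in_unit|]. apply (lim_eventually_lt _ _ _ Hlim). lra.
Qed.

End Queue.

Theorem lemma3 (c : nat) (a b cr d : nat -> nat -> R) :
  (1 <= c)%nat ->
  (forall i, (1 <= i <= c)%nat -> assumptionA 1 (a i) (b i) (cr i) (d i)) ->
  ergodic 1 c a b cr d ->
  forall x : nat -> R,
    (forall i, (1 <= i <= c)%nat -> x i = 1 \/ x i = -1) ->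
    exists beta0 : R, 0 < beta0 < 1 /\ Ex_rhs 1 c a b cr d x beta0 = 0.
Proof.
  intros Hc Hassum Herg x Hx.
  assert (Hx1 : forall i, (1 <= i <= c)%nat -> x i <= 1) by (intros i Hi; destruct (Hx i Hi); lra).
  destruct (filter_ex _ (filter_and _ _ at_left_1_in_unit
              (Ex_rhs_ones_eventually_neg c a b cr d Hassum Herg))) as [eta [Heta Hneg]].
  pose proof (Ex_rhs_le_ones c a b cr d x eta Hx1).
  pose proof (Ex_rhs_at_0_pos c a b cr d Hassum x Hc).
  destruct (Ranalysis5.IVT_interv (fun beta => - Ex_rhs 1 c a b cr d x beta) 0 eta)
    as [z [Hz Hroot]]; [| lra | lra | lra |].
  - intros beta Hbeta. apply continuity_pt_opp, Ex_rhs_continuous; [exact Hassum|].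
    rewrite Rabs_pos_eq; lra.
  - exists z. destruct (Req_dec z 0) as [-> | Hz0]; [lra|]. split; lra.
Qed.
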